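(* Let $\mathbb{V}$ be a BIT speciale variety, $A$ a $\mathbb{V}$-algebra and $H$ a non-empty subset of $A$. The following conditions are equivalent, and they imply $0\in H$: (i) for every $a\in A$, every $1\le i\le n$ and all $h_1,\dots,h_n,h'_1,\dots,h'_n\in H$, one has $\alpha_i(\theta(h_1,\dots,h_n,a),\theta(h'_1,\dots,h'_n,a))\in H$; (ii) for every $a\in A$ the $\sim_H$-equivalence class of $a$ equals $\theta(H,\dots,H,a)$, and moreover, for all $a,b\in A$ with $a\sim_H b$, one has $\alpha_i(a,b)\in H$ for every $1\le i\le n$.
   Context: BIT speciale: the algebraic theory of $\mathbb{V}$ contains a constant $0$ and, for some $n\ge1$, binary terms $\alpha_1,\dots,\alpha_n$ and an $(n+1)$-ary term $\theta$ such that $\alpha_i(x,x)=0$ ($1\le i\le n$) and $\theta(\alpha_1(x,y),\dots,\alpha_n(x,y),y)=x$ are identities of $\mathbb{V}$. Notation: $\theta(H,\dots,H,a)=\{\theta(h_1,\dots,h_n,a)\mid h_1,\dots,h_n\in H\}$. For $a,b\in A$, $a\sim_H b$ iff $\theta(H,\dots,H,a)=\theta(H,\dots,H,b)$. *)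

From mathcomp Require Import all_boot.
Set Implicit Arguments. Unset Strict Implicit. Unset Printing Implicit Defensive.

(* A BIT speciale signature on a carrier A: constant 0, binary terms
   alpha_1..alpha_n (indexed by 'I_n) and an (n+1)-ary term theta, whose
   first n arguments are given as a function 'I_n -> A. *)
Definition bit_speciale (n : nat) (A : Type) (zero : A)
  (alpha : 'I_n -> A -> A -> A) (theta : ('I_n -> A) -> A -> A) : Prop :=
  (forall i x, alpha i x x = zero) /\
  (forall x y, theta (fun i => alpha i x y) y = x).

Definition thetaH (n : nat) (A : Type) (theta : ('I_n -> A) -> A -> A)
  (H : A -> Prop) (a : A) : A -> Prop :=
  fun x => exists hs : 'I_n -> A, (forall i, H (hs i)) /\ x = theta hs a.

Definition simH (n : nat) (A : Type) (theta : ('I_n -> A) -> A -> A)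
  (H : A -> Prop) (a b : A) : Prop :=
  forall x, thetaH theta H a x <-> thetaH theta H b x.

(* Taking all h_j = h'_j = h in (i) gives alpha_i(x, x) = 0 in H, where
   x = theta(h, ..., h, h); so a = theta(alpha(a, a), a) lies in theta(H, a).
   If b = theta(hs, a), every x = theta(ks, a) equals theta(alpha(x, b), b),
   and alpha_i(x, b) lies in H by (i); so b in theta(H, a) forces theta(H, a)
   to be included in theta(H, b), and symmetrically (a in theta(H, b) by the
   same argument with x = a). Hence the sets theta(H, a) are exactly the ~_H
   classes, and when a = theta(hs, b), writing b = theta(alpha(b, b), b) and
   applying (i) at b puts alpha_i(a, b) in H. Conversely, under (ii)
   theta(hs, a) and theta(hs', a) are both ~_H a, hence ~_H each other. *)

From mathcomp Require Import all_boot.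

Set Implicit Arguments.
Unset Strict Implicit.
Unset Printing Implicit Defensive.

Section BitSpeciale.

Variables (n : nat) (A : Type) (zero : A).
Variables (alpha : 'I_n -> A -> A -> A) (theta : ('I_n -> A) -> A -> A).
Hypothesis alpha_xx : forall i x, alpha i x x = zero.
Hypothesis theta_alpha : forall x y, theta (fun i => alpha i x y) y = x.

Variable H : A -> Prop.

Definition alpha_theta_closed : Prop :=
  forall (a : A) (i : 'I_n) (hs hs' : 'I_n -> A),
    (forall j, H (hs j)) -> (forall j, H (hs' j)) ->
    H (alpha i (theta hs a) (theta hs' a)).

Lemma zero_of_alpha_theta_closed (i : 'I_n) (h : A) :
  H h -> alpha_theta_closed -> H zero.
Proof.
move=> Hh closedH.
by have := closedH h i (fun=> h) (fun=> h) (fun=> Hh) (fun=> Hh); rewrite alpha_xx.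
Qed.

Lemma thetaH_refl a : H zero -> thetaH theta H a a.
Proof.
move=> H0; exists (fun i => alpha i a a).
by split; [move=> i; rewrite alpha_xx | rewrite theta_alpha].
Qed.

Section Closed.

Hypothesis closedH : alpha_theta_closed.
Hypothesis H0 : H zero.

Lemma thetaH_euclidean a b x :
  thetaH theta H a b -> thetaH theta H a x -> thetaH theta H b x.
Proof.
move=> [hs [Hhs ->]] [ks [Hks ->]].
exists (fun i => alpha i (theta ks a) (theta hs a)).
by split; [move=> i; apply: closedH | rewrite theta_alpha].
Qed.

Lemma thetaH_sym a b : thetaH theta H a b -> thetaH theta H b a.
Proof. by move=> Hab; apply: thetaH_euclidean Hab _; apply: thetaH_refl. Qed.

Lemma simH_thetaH a b : simH theta H a b <-> thetaH theta H a b.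
Proof.
split=> [Sab | Tab x]; first by apply/Sab; apply: thetaH_refl.
by split; apply: thetaH_euclidean; last apply: thetaH_sym.
Qed.

Lemma alpha_simH a b : simH theta H a b -> forall i, H (alpha i a b).
Proof.
move=> /simH_thetaH /thetaH_sym [hs [Hhs ->]] i.
rewrite -{2}(theta_alpha b b).
by apply: closedH => // j; rewrite alpha_xx.
Qed.

End Closed.

Lemma alpha_theta_closed_of_simH :
  (forall a b, thetaH theta H a b -> simH theta H a b) ->
  (forall a b, simH theta H a b -> forall i, H (alpha i a b)) ->
  alpha_theta_closed.
Proof.
move=> simH_of_thetaH alpha_of_simH a i hs hs' Hhs Hhs'.
have Sa : simH theta H a (theta hs a) by apply: simH_of_thetaH; exists hs.
have Sa' : simH theta H a (theta hs' a) by apply: simH_of_thetaH; exists hs'.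
by apply: alpha_of_simH => x; apply: iff_trans (iff_sym (Sa x)) (Sa' x).
Qed.

End BitSpeciale.

Theorem lemma2p4 (n : nat) (A : Type) (zero : A)
  (alpha : 'I_n -> A -> A -> A) (theta : ('I_n -> A) -> A -> A)
  (Hn : 1 <= n) (HV : bit_speciale zero alpha theta)
  (H : A -> Prop) (Hne : exists h, H h) :
  let cond_i :=
    forall (a : A) (i : 'I_n) (hs hs' : 'I_n -> A),
      (forall j, H (hs j)) -> (forall j, H (hs' j)) ->
      H (alpha i (theta hs a) (theta hs' a)) in
  let cond_ii :=
    (forall a b : A, simH theta H a b <-> thetaH theta H a b) /\
    (forall a b : A, simH theta H a b -> forall i : 'I_n, H (alpha i a b)) in
  (cond_i <-> cond_ii) /\ (cond_i -> H zero).
Proof.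
case: HV => alpha_xx theta_alpha; case: Hne => h Hh /=.
have zero_in_H : alpha_theta_closed alpha theta H -> H zero :=
  zero_of_alpha_theta_closed alpha_xx (Ordinal Hn) Hh.
split=> //; split=> [closedH | [Sii alpha_ii]].
- have H0 := zero_in_H closedH.
  exact: conj (simH_thetaH alpha_xx theta_alpha closedH H0)
              (alpha_simH alpha_xx theta_alpha closedH H0).
- exact: alpha_theta_closed_of_simH (fun a b => proj2 (Sii a b)) alpha_ii.
Qed.
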